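(* Let $G=A\oplus B$ be an abelian group such that $\mathrm{Hom}(B,A)=\{0\}$. Then $G$ is strongly co-Hopfian if and only if both $A$ and $B$ are strongly co-Hopfian.
   Context: All groups are additive abelian groups. A group $G$ is strongly co-Hopfian (Sco-H) if for every endomorphism $f$ of $G$ the descending chain $\operatorname{im} f\supseteq \operatorname{im} f^2\supseteq\cdots\supseteq \operatorname{im} f^n\supseteq\cdots$ is stationary, i.e. $f^n(G)=f^{n+1}(G)$ for some $n\in\mathbb N$. *)

From HB Require Import structures.
From mathcomp Require Import all_boot all_algebra.
Set Implicit Arguments. Unset Strict Implicit. Unset Printing Implicit Defensive.
Import GRing.Theory.
Local Open Scope ring_scope.

Definition im_iter (G : zmodType) (f : G -> G) (n : nat) : G -> Prop :=
  fun y => exists x, y = iter n f x.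

(* Strongly co-Hopfian: for every endomorphism f, the chain
   im f ⊇ im f^2 ⊇ ... is stationary, i.e. im f^n = im f^(n+1) for some n. *)
Definition strongly_coHopfian (G : zmodType) : Prop :=
  forall f : {additive G -> G}, exists n : nat,
    forall y : G, im_iter f n y <-> im_iter f n.+1 y.

Definition trivial_Hom (B A : zmodType) : Prop :=
  forall (h : {additive B -> A}) (b : B), h b = 0.

From mathcomp Require Import all_boot all_algebra.
From HB Require Import structures.
Set Implicit Arguments. Unset Strict Implicit. Unset Printing Implicit Defensive.
Import GRing.Theory.
Local Open Scope ring_scope.

(* A direct summand is a retract, and if f is an endomorphism of the summand
   then i ∘ f ∘ p has iterates i ∘ f^n ∘ p, so the image chain of f stabilises
   with that of i ∘ f ∘ p.  Conversely, since Hom(B, A) = 0 every endomorphism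
   φ of A ⊕ B is lower triangular, φ(a, b) = (α a, γ a + δ b).  If the chains
   of α and δ stabilise at n and m, then φ^(n+m)(g) splits as
   φ^(n+m+1)(t, 0) + (0, δ^m c) with α^n g₁ = α^(n+1) t, and the second term
   lies in δ^(n+m+1)(B), so φ^(n+m)(G) = φ^(n+m+1)(G). *)

Section ImageChain.
Variables (G : zmodType) (f : G -> G).

Definition im_stable (n : nat) : Prop :=
  forall y : G, im_iter f n y <-> im_iter f n.+1 y.

Lemma im_iter_leq n m y : (n <= m)%N -> im_iter f m y -> im_iter f n y.
Proof.
by move/subnKC => <- [x ->]; exists (iter (m - n) f x); rewrite iterD.
Qed.

Lemma im_stableP n :
  (forall y, im_iter f n y -> im_iter f n.+1 y) -> im_stable n.
Proof. by move=> sub y; split=> [/sub | /im_iter_leq]; last apply. Qed.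

Lemma im_iter_stable n m y :
  im_stable n -> (n <= m)%N -> im_iter f n y -> im_iter f m y.
Proof.
move=> stable_n /subnKC <-; elim: (m - n)%N y => [|k IHk] y; first by rewrite addn0.
move=> /IHk [x ->]; have [z Ez] : im_iter f n.+1 (iter n f x).
  by apply/stable_n; exists x.
by exists z; rewrite addnC iterD Ez -iterD addnS -addSn addnC.
Qed.

Lemma im_stable_leq n m : im_stable n -> (n <= m)%N -> im_stable m.
Proof.
move=> stable_n le_nm; apply: im_stableP => y /(im_iter_leq le_nm).
by move/(im_iter_stable stable_n (leqW le_nm)).
Qed.

End ImageChain.

Lemma iter_raddfD (G : zmodType) (f : {additive G -> G}) n :
  {morph iter n f : x y / x + y}.
Proof. by elim: n => // n IHn x y; rewrite !iterS IHn raddfD. Qed.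

Section Retract.
Variables (G H : zmodType) (i : {additive H -> G}) (p : {additive G -> H}).
Hypothesis ipK : cancel i p.

Lemma iterS_retract (f : H -> H) n x :
  iter n.+1 (i \o f \o p) x = i (iter n.+1 f (p x)).
Proof. by elim: n x => [|n IHn] x; rewrite // iterS IHn /= ipK. Qed.

Lemma strongly_coHopfian_retract :
  strongly_coHopfian G -> strongly_coHopfian H.
Proof.
move=> sG f; have [n stable_n] := sG (i \o f \o p).
have stable_n1 := im_stable_leq stable_n (leqnSn n).
exists n.+1; apply: im_stableP => _ [x ->].
have [z Ez] : im_iter (i \o f \o p) n.+2 (i (iter n.+1 f x)).
  by apply/stable_n1; exists (i x); rewrite iterS_retract ipK.
by exists (p z); rewrite -[LHS]ipK Ez iterS_retract ipK.
Qed.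

End Retract.

Definition inj1 (A B : zmodType) (a : A) : A * B := (a, 0).
Definition inj2 (A B : zmodType) (b : B) : A * B := (0, b).
Arguments inj1 {A B}.
Arguments inj2 {A B}.

Fact inj1_is_zmod_morphism (A B : zmodType) : zmod_morphism (@inj1 A B).
Proof. by move=> x y; rewrite /inj1; congr pair; rewrite subr0. Qed.
HB.instance Definition _ (A B : zmodType) :=
  GRing.isZmodMorphism.Build _ _ (@inj1 A B) (@inj1_is_zmod_morphism A B).

Fact inj2_is_zmod_morphism (A B : zmodType) : zmod_morphism (@inj2 A B).
Proof. by move=> x y; rewrite /inj2; congr pair; rewrite subr0. Qed.
HB.instance Definition _ (A B : zmodType) :=
  GRing.isZmodMorphism.Build _ _ (@inj2 A B) (@inj2_is_zmod_morphism A B).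

Lemma inj1Dinj2 (A B : zmodType) (a : A) (b : B) : inj1 a + inj2 b = (a, b).
Proof. by rewrite /inj1 /inj2; congr pair; rewrite ?addr0 ?add0r. Qed.

Section LowerTriangular.
Variables (A B : zmodType) (phi : {additive (A * B) -> (A * B)}).
Hypothesis phi_inj2_fst : forall b : B, (phi (inj2 b)).1 = 0.

Local Notation alpha := (fst \o phi \o inj1).
Local Notation delta := (snd \o phi \o inj2).

Lemma fst_iter n x : (iter n phi x).1 = iter n alpha x.1.
Proof.
elim: n => //= n <-; case: (iter n phi x) => a b /=.
by rewrite -inj1Dinj2 raddfD /= phi_inj2_fst addr0.
Qed.

Lemma iter_inj2 n b : iter n phi (inj2 b) = inj2 (iter n delta b).
Proof.
by elim: n => //= n ->; rewrite [phi _]surjective_pairing phi_inj2_fst.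
Qed.

Lemma im_stable_lower_triangular na nd :
  im_stable alpha na -> im_stable delta nd -> im_stable phi (na + nd).
Proof.
move=> stable_alpha stable_delta; apply: im_stableP => _ [g ->].
set h := iter na phi g.
have [t Et] : im_iter alpha na.+1 h.1.
  by apply/stable_alpha; exists g.1; rewrite /h fst_iter.
set c := h.2 - (iter na.+1 phi (inj1 t)).2.
have split_h : h = iter na.+1 phi (inj1 t) + inj2 c.
  rewrite [LHS]surjective_pairing; congr pair.
    by rewrite Et -[(inj2 c).1]/0 addr0 fst_iter.
  by rewrite -[(inj2 c).2]/c addrC subrK.
have [b Eb] : im_iter delta (na + nd).+1 (iter nd delta c).
  by apply: (im_iter_stable stable_delta); [exact/leqW/leq_addl | exists c].
exists (inj1 t + inj2 b).
rewrite iter_raddfD iter_inj2 -Eb -iter_inj2 addnC iterD -/h split_h.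
by rewrite iter_raddfD -iterD addnS.
Qed.

End LowerTriangular.

Theorem mainTheorem1 (A B : zmodType) :
  trivial_Hom B A ->
  (strongly_coHopfian (A * B)%type <->
   strongly_coHopfian A /\ strongly_coHopfian B).
Proof.
move=> HomBA0; split.
  move=> sAB; split.
    by apply: (strongly_coHopfian_retract (i := @inj1 A B) (p := fst)).
  by apply: (strongly_coHopfian_retract (i := @inj2 A B) (p := snd)).
case=> sA sB phi.
have [na stable_alpha] := sA (fst \o phi \o inj1).
have [nd stable_delta] := sB (snd \o phi \o inj2).
exists (na + nd)%N; apply: im_stable_lower_triangular stable_alpha stable_delta.
exact: HomBA0 (fst \o phi \o inj2).
Qed.
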